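(* Let $m,n\ge1$, $a\in(0,\infty)^m$, $b\in(0,\infty)^n$, and let $\Omega$ be a real $m\times n$ matrix. Then the function $F$ attains its maximum over $\mathcal A$ on the subset $\tilde{\mathcal A}$. Moreover, $\tilde{\mathcal A}$ is a convex, compact subset of a finite-dimensional Euclidean space, and $F$ is concave when restricted to $\tilde{\mathcal A}$.
   Context: $\mathcal A$ is the set of pairs $(A,B)$ of $(m+1)\times(n+1)$ real matrices (indices $i=0,\dots,m$, $j=0,\dots,n$) with: $A_{ij},B_{ij}\ge0$; $a_i=\sum_{j=0}^nA_{ij}$ for $i=1,\dots,m$; $A_{0j}=0$ for all $j$; $b_j=\sum_{i=0}^mB_{ij}$ for $j=1,\dots,n$; $B_{i0}=0$ for all $i$. $F:\mathcal A\to\mathbb{R}$, $F(A,B)=\sum_{i=1}^m\sum_{j=1}^n\sqrt{A_{ij}B_{ij}}\,\Omega_{ij}$. $\tilde{\mathcal A}\subset\mathcal A$ consists of those $(A,B)$ with: (1) $A_{ij}=B_{ij}=0$ whenever $i,j\ge1$ and $\Omega_{ij}\le0$; (2) for $j\ge1$, $B_{0j}=0$ if there is $i\ge1$ with $\Omega_{ij}>0$; (3) for $i\ge1$, $A_{i0}=0$ if there is $j\ge1$ with $\Omega_{ij}>0$. *)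

From HB Require Import structures.
From mathcomp Require Import all_boot all_order all_algebra.
From mathcomp Require Import all_classical all_reals all_analysis.
Set Implicit Arguments. Unset Strict Implicit. Unset Printing Implicit Defensive.
Import Order.TTheory GRing.Theory Num.Theory.
Import numFieldNormedType.Exports.
Local Open Scope ring_scope.
Local Open Scope classical_set_scope.

(* Matrices are (m+1) x (n+1), indices 0..m and 0..n; index i >= 1 of the
   paper corresponds to [lift ord0 i] with i : 'I_m (paper index i+1). *)
Notation MM R m n := ('M[R]_(m.+1, n.+1) * 'M[R]_(m.+1, n.+1))%type.

Section Defs.
Context {R : realType} {m n : nat}.

Definition up (i : 'I_m) : 'I_m.+1 := lift ord0 i.
Definition upn (j : 'I_n) : 'I_n.+1 := lift ord0 j.

Definition Aset (a : 'I_m -> R) (b : 'I_n -> R) : set (MM R m n) :=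
  [set p : MM R m n | let A := p.1 in let B := p.2 in
    [/\ (forall i j, 0 <= A i j) /\ (forall i j, 0 <= B i j),
        (forall i : 'I_m, a i = \sum_(j < n.+1) A (up i) j),
        (forall j, A ord0 j = 0),
        (forall j : 'I_n, b j = \sum_(i < m.+1) B i (upn j)) &
        (forall i, B i ord0 = 0)]].

Definition Atilde (Omega : 'M[R]_(m, n)) (a : 'I_m -> R) (b : 'I_n -> R)
  : set (MM R m n) :=
  [set p : MM R m n | Aset a b p /\
    [/\ (forall i j, Omega i j <= 0 ->
           p.1 (up i) (upn j) = 0 /\ p.2 (up i) (upn j) = 0),
        (forall j, (exists i, 0 < Omega i j) -> p.2 ord0 (upn j) = 0) &
        (forall i, (exists j, 0 < Omega i j) -> p.1 (up i) ord0 = 0)]].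

Definition Ffun (Omega : 'M[R]_(m, n)) (p : MM R m n) : R :=
  \sum_(i < m) \sum_(j < n)
     Num.sqrt (p.1 (up i) (upn j) * p.2 (up i) (upn j)) * Omega i j.

Definition cvx (t : R) (p q : MM R m n) : MM R m n :=
  (t *: p.1 + (1 - t) *: q.1, t *: p.2 + (1 - t) *: q.2).

End Defs.

(* Given an admissible pair (A, B), move in every row i of A the mass sitting
   on column 0 or on entries with Omega_ij <= 0 onto one entry with
   Omega_ij > 0 (onto column 0 if there is none), and treat the columns of B
   likewise.  The result lies in Atilde, and F does not decrease: only the
   terms with Omega_ij > 0 change, and they grow.  Atilde is closed and
   bounded, hence compact, so the continuous F attains on Atilde a maximum,
   which then dominates F on all of A.  Atilde is convex since its
   constraints are linear, and F is concave on it because (x, y) |-> sqrt(xy)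
   is concave (Cauchy-Schwarz), the terms with Omega_ij <= 0 vanishing on
   Atilde. *)

From HB Require Import structures.
From mathcomp Require Import all_boot all_order all_algebra.
From mathcomp Require Import all_classical all_reals all_analysis.
From mathcomp Require Import ring.
Import Order.TTheory GRing.Theory Num.Theory.
Import numFieldNormedType.Exports.
Local Open Scope ring_scope.
Local Open Scope classical_set_scope.

Set Implicit Arguments.
Unset Strict Implicit.
Unset Printing Implicit Defensive.

Section MassReduction.
Variables (R : realDomainType) (m n : nat) (Om : 'M[R]_(m, n)).
Variable A : 'M[R]_(m.+1, n.+1).

Definition positive_col (i : 'I_m) : option 'I_n := [pick j | 0 < Om i j].

Definition surplus (i : 'I_m) : R :=
  A (up i) ord0 + \sum_j (if 0 < Om i j then 0 else A (up i) (upn j)).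

Definition reduce : 'M[R]_(m.+1, n.+1) := \matrix_(k, l)
  match unlift ord0 k, unlift ord0 l with
  | None, _ => 0
  | Some i, None => if positive_col i is None then surplus i else 0
  | Some i, Some j => (if 0 < Om i j then A k l else 0)
                      + (if positive_col i == Some j then surplus i else 0)
  end.

Lemma reduce_top l : reduce ord0 l = 0.
Proof. by rewrite mxE unlift_none. Qed.

Lemma reduce_up0 i :
  reduce (up i) ord0 = if positive_col i is None then surplus i else 0.
Proof. by rewrite mxE liftK unlift_none. Qed.

Lemma reduce_upE i j : reduce (up i) (upn j) =
  (if 0 < Om i j then A (up i) (upn j) else 0)
  + (if positive_col i == Some j then surplus i else 0).
Proof. by rewrite mxE !liftK. Qed.

Lemma reduce_nonpos i j : Om i j <= 0 -> reduce (up i) (upn j) = 0.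
Proof.
move=> Omij_le0; rewrite reduce_upE ltNge Omij_le0 add0r /positive_col.
case: pickP => [j' Omij'_gt0|_] //; case: eqP => // -[j'j].
by move: Omij'_gt0; rewrite j'j ltNge Omij_le0.
Qed.

Lemma reduce_up0_pos i : (exists j, 0 < Om i j) -> reduce (up i) ord0 = 0.
Proof.
move=> [j Omij_gt0]; rewrite reduce_up0 /positive_col.
by case: pickP => // /(_ j); rewrite Omij_gt0.
Qed.

Lemma reduce_row_sum i :
  \sum_l reduce (up i) l = \sum_l A (up i) l.
Proof.
have deposit : \sum_j (if positive_col i == Some j then surplus i else 0)
    = if positive_col i is Some _ then surplus i else 0.
  case: positive_col => [j0|]; last by rewrite big1.
  rewrite (bigD1 j0) //= eqxx big1 ?addr0 // => j.
  by rewrite (inj_eq Some_inj) eq_sym => /negbTE ->.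
have split_entry j : A (up i) (upn j) =
    (if 0 < Om i j then 0 else A (up i) (upn j))
    + (if 0 < Om i j then A (up i) (upn j) else 0).
  by case: ifP; rewrite ?add0r ?addr0.
rewrite !big_ord_recl reduce_up0.
under eq_bigr do rewrite reduce_upE.
under [in RHS]eq_bigr do rewrite split_entry.
rewrite !big_split deposit /= /surplus.
by case: positive_col => [j0|]; ring.
Qed.

Hypothesis A_ge0 : forall k l, 0 <= A k l.

Lemma surplus_ge0 i : 0 <= surplus i.
Proof. by rewrite addr_ge0 // sumr_ge0 // => j _; case: ifP. Qed.

Lemma reduce_ge0 k l : 0 <= reduce k l.
Proof.
case: (unliftP ord0 k) => [i ->|->]; last by rewrite reduce_top.
case: (unliftP ord0 l) => [j ->|->].
  by rewrite reduce_upE addr_ge0 //; case: ifP; rewrite ?surplus_ge0.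
by rewrite reduce_up0; case: positive_col; rewrite ?surplus_ge0.
Qed.

Lemma le_reduce_pos i j :
  0 < Om i j -> A (up i) (upn j) <= reduce (up i) (upn j).
Proof.
move=> Omij_gt0; rewrite reduce_upE Omij_gt0 lerDl.
by case: ifP; rewrite ?surplus_ge0.
Qed.

End MassReduction.

Section PairReduction.
Variables (R : realType) (m n : nat) (Om : 'M[R]_(m, n)).
Variables (a : 'I_m -> R) (b : 'I_n -> R).

Definition reduce_pair (p : MM R m n) : MM R m n :=
  (reduce Om p.1, (reduce Om^T p.2^T)^T).

Lemma reduce_pair_Atilde p : Aset a b p -> Atilde Om a b (reduce_pair p).
Proof.
case: p => A B [[A_ge0 B_ge0] rowA topA colB leftB] /=.
have BT_ge0 k l : 0 <= B^T k l by rewrite mxE.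
have OmT i j : Om^T j i = Om i j by rewrite mxE.
split; split => /=.
- by split=> k l; rewrite ?[_^T _ _]mxE reduce_ge0.
- by move=> i; rewrite reduce_row_sum.
- exact: reduce_top.
- move=> j; rewrite colB; under eq_bigr do rewrite mxE.
  by rewrite reduce_row_sum; apply: eq_bigr => i _; rewrite mxE.
- by move=> i; rewrite [_^T _ _]mxE reduce_top.
- by move=> i j Omij_le0; rewrite [_^T _ _]mxE !reduce_nonpos ?OmT.
- move=> j [i Omij_gt0]; rewrite [_^T _ _]mxE reduce_up0_pos //.
  by exists i; rewrite OmT.
- exact: reduce_up0_pos.
Qed.

Lemma Ffun_reduce_pair p : Aset a b p -> Ffun Om p <= Ffun Om (reduce_pair p).
Proof.
case: p => A B [[A_ge0 B_ge0] _ _ _ _].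
have BT_ge0 k l : 0 <= B^T k l by rewrite mxE.
apply: ler_sum => i _; apply: ler_sum => j _ /=.
have [Omij_le0|Omij_gt0] := lerP (Om i j) 0.
  rewrite reduce_nonpos // mul0r sqrtr0 mul0r.
  by rewrite mulr_ge0_le0 ?sqrtr_ge0.
apply: ler_wpM2r (ltW Omij_gt0) _ _ _; apply: ler_wsqrtr.
apply: ler_pM; rewrite ?le_reduce_pos //.
have := le_reduce_pos BT_ge0 (Om := Om^T) (i := j) (j := i).
by rewrite [_^T _ _]mxE [B^T _ _]mxE [Om^T _ _]mxE; apply.
Qed.

Definition border_point : MM R m n :=
  (\matrix_(k, l) if unlift ord0 l is None then oapp a 0 (unlift ord0 k) else 0,
   \matrix_(k, l) if unlift ord0 k is None then oapp b 0 (unlift ord0 l) else 0).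

Lemma border_point_Aset : (forall i, 0 <= a i) -> (forall j, 0 <= b j) ->
  Aset a b border_point.
Proof.
move=> a_ge0 b_ge0; split; [split|..] => /=.
- by move=> k l; rewrite mxE; case: unlift => //; case: unlift.
- by move=> k l; rewrite mxE; case: unlift => //; case: unlift.
- move=> i; rewrite big_ord_recl big1 ?addr0 => [|j _]; last by rewrite mxE liftK.
  by rewrite mxE unlift_none liftK.
- by move=> j; rewrite mxE unlift_none; case: unlift.
- move=> j; rewrite big_ord_recl big1 ?addr0 => [|i _]; last by rewrite mxE liftK.
  by rewrite mxE unlift_none liftK.
- by move=> i; rewrite mxE unlift_none; case: unlift.
Qed.

End PairReduction.

Lemma sqrtrM_concave (R : rcfType) (x1 y1 x2 y2 t : R) :
  0 <= x1 -> 0 <= y1 -> 0 <= x2 -> 0 <= y2 -> 0 <= t <= 1 ->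
  t * Num.sqrt (x1 * y1) + (1 - t) * Num.sqrt (x2 * y2) <=
  Num.sqrt ((t * x1 + (1 - t) * x2) * (t * y1 + (1 - t) * y2)).
Proof.
move=> x1_ge0 y1_ge0 x2_ge0 y2_ge0 /andP[t_ge0 t_le1].
have cauchy_schwarz (X1 Y1 X2 Y2 : R) :
    t * (X1 * Y1) + (1 - t) * (X2 * Y2) <=
    Num.sqrt ((t * X1 ^+ 2 + (1 - t) * X2 ^+ 2) * (t * Y1 ^+ 2 + (1 - t) * Y2 ^+ 2)).
  apply: le_trans (ler_norm _) _; rewrite -sqrtr_sqr; apply: ler_wsqrtr.
  rewrite -subr_ge0 (_ : _ - _ = t * (1 - t) * (X1 * Y2 - X2 * Y1) ^+ 2).
    by rewrite mulr_ge0 ?sqr_ge0 // mulr_ge0 // subr_ge0.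
  by ring.
have := cauchy_schwarz (Num.sqrt x1) (Num.sqrt y1) (Num.sqrt x2) (Num.sqrt y2).
by rewrite !sqr_sqrtr // -!sqrtrM.
Qed.

Section Convexity.
Variables (R : realType) (m n : nat) (Om : 'M[R]_(m, n)).
Variables (a : 'I_m -> R) (b : 'I_n -> R).
Variable t : R.
Hypothesis t01 : 0 <= t <= 1.

Lemma Atilde_cvx p q :
  Atilde Om a b p -> Atilde Om a b q -> Atilde Om a b (cvx t p q).
Proof.
have /andP[t_ge0 t_le1] := t01; have t'_ge0 : 0 <= 1 - t by rewrite subr_ge0.
have cvx_cst (x : R) : t * x + (1 - t) * x = x by rewrite -mulrDl addrC subrK mul1r.
case: p q => [A1 B1] [A2 B2].
move=> [[[A1_ge0 B1_ge0] rowA1 topA1 colB1 leftB1] [nonpos1 posB1 posA1]].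
move=> [[[A2_ge0 B2_ge0] rowA2 topA2 colB2 leftB2] [nonpos2 posB2 posA2]].
split; split => /=.
- by split=> k l; rewrite !mxE addr_ge0 ?mulr_ge0.
- move=> i; under eq_bigr do rewrite !mxE.
  by rewrite big_split /= -!mulr_sumr -rowA1 -rowA2 cvx_cst.
- by move=> j; rewrite !mxE topA1 topA2 !mulr0 addr0.
- move=> j; under eq_bigr do rewrite !mxE.
  by rewrite big_split /= -!mulr_sumr -colB1 -colB2 cvx_cst.
- by move=> i; rewrite !mxE leftB1 leftB2 !mulr0 addr0.
- move=> i j Omij_le0; rewrite !mxE.
  have [-> ->] := nonpos1 i j Omij_le0; have [-> ->] := nonpos2 i j Omij_le0.
  by rewrite !mulr0 addr0.
- by move=> j Omj_pos; rewrite !mxE posB1 // posB2 // !mulr0 addr0.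
- by move=> i Omi_pos; rewrite !mxE posA1 // posA2 // !mulr0 addr0.
Qed.

Lemma Ffun_concave p q : Atilde Om a b p -> Atilde Om a b q ->
  t * Ffun Om p + (1 - t) * Ffun Om q <= Ffun Om (cvx t p q).
Proof.
case: p q => [A1 B1] [A2 B2].
move=> [[[A1_ge0 B1_ge0] _ _ _ _] [nonpos1 _ _]].
move=> [[[A2_ge0 B2_ge0] _ _ _ _] [nonpos2 _ _]].
rewrite /Ffun !mulr_sumr -big_split; apply: ler_sum => i _.
rewrite !mulr_sumr -big_split; apply: ler_sum => j _ /=; rewrite !mxE.
have [Omij_le0|Omij_gt0] := lerP (Om i j) 0.
  have [-> ->] := nonpos1 i j Omij_le0; have [-> ->] := nonpos2 i j Omij_le0.
  by rewrite !(mulr0, mul0r, addr0, sqrtr0).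
rewrite !mulrA -mulrDl; apply: ler_wpM2r (ltW Omij_gt0) _ _ _.
exact: sqrtrM_concave.
Qed.

End Convexity.

Lemma ler_sum_term (R : numDomainType) (I : finType) (F : I -> R) i :
  (forall j, 0 <= F j) -> F i <= \sum_j F j.
Proof. by move=> F_ge0; rewrite (bigD1 i) //= lerDl sumr_ge0. Qed.

Lemma continuous_mx (T U : topologicalType) m n (f : T -> 'M[U]_(m, n)) :
  (forall i j, continuous (fun x => f x i j)) -> continuous f.
Proof.
move=> f_cont x A [P P_nbhs sPA].
apply: (@filterS _ _ _ [set y | forall ij : 'I_m * 'I_n, P ij.1 ij.2 (f y ij.1 ij.2)]).
  by move=> y Py; apply: sPA => i j; exact: (Py (i, j)).
by apply: filter_forall => -[i j]; exact: f_cont.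
Qed.

Lemma vec_mxE (R : Type) m n (v : 'rV[R]_(m * n)) i j :
  vec_mx v i j = v ord0 (mxvec_index i j).
Proof. by rewrite -[v in RHS]vec_mxK mxvecE. Qed.

Lemma vec_mx_continuous (R : numFieldType) m n : continuous (@vec_mx R m n).
Proof.
apply: continuous_mx => i j; under eq_fun do rewrite vec_mxE.
exact: coord_continuous.
Qed.

Lemma compact_mx_box (R : realType) m n (lo hi : R) :
  compact [set X : 'M[R]_(m, n) | forall i j, lo <= X i j <= hi].
Proof.
have := continuous_compact (continuous_subspaceT (@vec_mx_continuous R m n))
  (rV_compact (fun=> @segment_compact R lo hi)).
congr compact; apply/seteqP; split.
  move=> _ [v v_box <-] i j.
  by have := v_box (mxvec_index i j); rewrite vec_mxE /= in_itv.
move=> X X_box; exists (mxvec X); last exact: mxvecK.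
by move=> k; case: (mxvec_indexP k) => i j /=; rewrite mxvecE in_itv /= X_box.
Qed.

Section ClosedPredicates.
Variable T : topologicalType.
Implicit Types P Q S U V : T -> Prop.

Lemma closed_forall (I : Type) (Q : I -> T -> Prop) :
  (forall i, closed [set x | Q i x]) -> closed [set x | forall i, Q i x].
Proof.
move=> Q_closed; have := closed_bigI (D := setT) (fun i _ => Q_closed i).
by congr closed; apply/seteqP; split=> x /= Qx i => [|_]; apply: Qx.
Qed.

Lemma closed_implies (P : Prop) Q :
  closed [set x | Q x] -> closed [set x | P -> Q x].
Proof.
case: (pselect P) => [p | np] Q_closed.
  by congr closed: Q_closed; apply/seteqP; split=> x /= Qx => [_ //|]; exact: Qx.
by congr closed: (@closedT T); apply/seteqP; split=> x // _ /np.
Qed.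

Lemma closed_and3 P Q S :
  closed [set x | P x] -> closed [set x | Q x] -> closed [set x | S x] ->
  closed [set x | [/\ P x, Q x & S x]].
Proof.
move=> cP cQ cS; congr closed: (closedI cP (closedI cQ cS)).
by apply/seteqP; split=> x /= => [[? []]|[]].
Qed.

Lemma closed_and5 P Q S U V :
  closed [set x | P x] -> closed [set x | Q x] -> closed [set x | S x] ->
  closed [set x | U x] -> closed [set x | V x] ->
  closed [set x | [/\ P x, Q x, S x, U x & V x]].
Proof.
move=> cP cQ cS cU cV.
congr closed: (closedI cP (closedI cQ (closedI cS (closedI cU cV)))).
by apply/seteqP; split=> x /= => [[? [? [? []]]]|[]].
Qed.

Variable R : realType.
Implicit Types f g : T -> R.

Lemma closed_eq_continuous f g :
  continuous f -> continuous g -> closed [set x | f x = g x].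
Proof.
move=> f_cont g_cont.
have fg_cont : continuous (fun x => f x - g x).
  by move=> x; apply: continuousB; [exact: f_cont | exact: g_cont].
congr closed: ((continuous_closedP _).1 fg_cont _ (@closed_eq R 0)).
apply/seteqP; split=> x /=; first by move/eqP; rewrite subr_eq0 => /eqP.
by move=> ->; rewrite subrr.
Qed.

Lemma closed_ge0_continuous f : continuous f -> closed [set x | 0 <= f x].
Proof. by move=> f_cont; exact: (continuous_closedP _).1 f_cont _ (@closed_ge R 0). Qed.

End ClosedPredicates.

Section Compactness.
Variables (R : realType) (m n : nat) (Om : 'M[R]_(m, n)).
Variables (a : 'I_m -> R) (b : 'I_n -> R).

Lemma fst_entry_continuous i j : continuous (fun p : MM R m n => p.1 i j).
Proof.
move=> p; apply: (@continuous_comp _ _ _ fst (fun M : 'M[R]_(m.+1, n.+1) => M i j)).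
  exact: cvg_fst.
exact: coord_continuous.
Qed.

Lemma snd_entry_continuous i j : continuous (fun p : MM R m n => p.2 i j).
Proof.
move=> p; apply: (@continuous_comp _ _ _ snd (fun M : 'M[R]_(m.+1, n.+1) => M i j)).
  exact: cvg_snd.
exact: coord_continuous.
Qed.

Lemma sum_continuous (T : topologicalType) (I : Type) (r : seq I) (f : I -> T -> R) :
  (forall i, continuous (f i)) -> continuous (fun x => \sum_(i <- r) f i x).
Proof.
move=> f_cont; apply: continuous_big => [|i _]; [exact: add_continuous | exact: f_cont].
Qed.

Lemma Ffun_continuous : continuous (Ffun Om).
Proof.
apply: sum_continuous => i; apply: sum_continuous => j.
pose prod_ij (p : MM R m n) := p.1 (up i) (upn j) * p.2 (up i) (upn j).
have prod_cont : continuous prod_ij.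
  move=> p; apply: (@continuousM _ _ (fun p : MM R m n => p.1 (up i) (upn j))).
    exact: fst_entry_continuous.
  exact: snd_entry_continuous.
move=> p; apply: (@continuousM _ _ (Num.sqrt \o prod_ij)); last exact: cst_continuous.
by apply: (@continuous_comp _ _ _ prod_ij); [exact: prod_cont | exact: sqrt_continuous].
Qed.

Lemma Atilde_closed : closed (Atilde Om a b).
Proof.
have cst_cont (c : R) : continuous (fun _ : MM R m n => c) by exact: cst_continuous.
have fst_cont := fst_entry_continuous; have snd_cont := snd_entry_continuous.
apply: closedI; [apply: closed_and5 | apply: closed_and3].
- by apply: closedI; do 2 apply: closed_forall => ?; exact: closed_ge0_continuous.
- by apply: closed_forall => i; apply: closed_eq_continuous => //; exact: sum_continuous.
- by apply: closed_forall => j; exact: closed_eq_continuous.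
- by apply: closed_forall => j; apply: closed_eq_continuous => //; exact: sum_continuous.
- by apply: closed_forall => i; exact: closed_eq_continuous.
- do 2 apply: closed_forall => ?; apply: closed_implies.
  by apply: closedI; exact: closed_eq_continuous.
- by apply: closed_forall => j; apply: closed_implies; exact: closed_eq_continuous.
- by apply: closed_forall => i; apply: closed_implies; exact: closed_eq_continuous.
Qed.

Lemma Atilde_compact :
  (forall i, 0 <= a i) -> (forall j, 0 <= b j) -> compact (Atilde Om a b).
Proof.
move=> a_ge0 b_ge0.
apply: subclosed_compact Atilde_closed
  (compact_setX (compact_mx_box (lo := 0) (hi := \sum_i a i))
                (compact_mx_box (lo := 0) (hi := \sum_j b j))) _.
move=> [A B] [[[A_ge0 B_ge0] rowA topA colB leftB] _]; split=> k l /=.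
- rewrite A_ge0 /=.
  case: (unliftP ord0 k) => [i ->|->]; last by rewrite topA sumr_ge0.
  apply: le_trans (ler_sum_term _ a_ge0); rewrite rowA; exact: ler_sum_term.
- rewrite B_ge0 /=.
  case: (unliftP ord0 l) => [j ->|->]; last by rewrite leftB sumr_ge0.
  apply: le_trans (ler_sum_term _ b_ge0); rewrite colB; exact: ler_sum_term (B_ge0^~ _).
Qed.

End Compactness.

Theorem lemma2p14 (R : realType) (m n : nat) (hm : (0 < m)%N) (hn : (0 < n)%N)
  (a : 'I_m -> R) (b : 'I_n -> R)
  (ha : forall i, 0 < a i) (hb : forall j, 0 < b j)
  (Omega : 'M[R]_(m, n)) :
  (exists2 p, Atilde Omega a b p &
     forall q, Aset a b q -> Ffun Omega q <= Ffun Omega p)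
  /\ (forall p q t, Atilde Omega a b p -> Atilde Omega a b q ->
        0 <= t <= 1 -> Atilde Omega a b (cvx t p q))
  /\ compact (Atilde Omega a b)
  /\ (forall p q t, Atilde Omega a b p -> Atilde Omega a b q ->
        0 <= t <= 1 ->
        t * Ffun Omega p + (1 - t) * Ffun Omega q <= Ffun Omega (cvx t p q)).
Proof.
have a_ge0 i : 0 <= a i by exact: ltW.
have b_ge0 j : 0 <= b j by exact: ltW.
have Atilde_cpt := Atilde_compact (Om := Omega) a_ge0 b_ge0.
have Atilde_ne : Atilde Omega a b !=set0.
  exists (reduce_pair Omega (border_point a b)).
  exact/reduce_pair_Atilde/border_point_Aset.
split; [|split; [|split]] => //.
- have [p /set_mem Atilde_p p_max] := compact_EVT_max Atilde_ne Atilde_cpt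
    (continuous_subspaceT (@Ffun_continuous R m n Omega)).
  exists p => // q Aset_q; apply: le_trans (Ffun_reduce_pair Omega Aset_q) _.
  by apply/p_max/mem_set/reduce_pair_Atilde.
- by move=> p q t Atilde_p Atilde_q t01; exact: Atilde_cvx.
- by move=> p q t Atilde_p Atilde_q t01; exact (Ffun_concave t01 Atilde_p Atilde_q).
Qed.
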